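(* Let $\mathbf{x}_k\in\mathbb{R}^d$ and $\sigma_k>0$, and let $\epsilon>0$. Suppose the sampled estimates $\mathbf{g}_k,\mathbf{B}_k,\mathbf{T}_k$ at $\mathbf{x}_k$ satisfy the sampling condition with accuracy $\epsilon$ and constants $\kappa_g=\frac14,\kappa_b=\frac14,\kappa_t=\frac12$, and set $\epsilon_1:=\epsilon$. Let $\mathbf{s}_k$ satisfy the approximate minimization condition with constant $\theta>0$. Then $$\|\mathbf{s}_k\|\ge\kappa_k^{-1/3}\left(\chi_{f,1}(\mathbf{x}_k+\mathbf{s}_k)-\tfrac12\epsilon_1\right)^{1/3},\qquad\kappa_k=\sigma_k+\frac{L_t}{2}+\theta+\frac14,$$ where $(\cdot)^{1/3}$ is the real cube root.
   Context: $f(\mathbf{x})=\frac1n\sum_{i=1}^n f_i(\mathbf{x})$, each $f_i\in C^3(\mathbb{R}^d,\mathbb{R})$ with $f_i,\nabla f_i,\nabla^2 f_i,\nabla^3 f_i$ Lipschitz with constants $L_f,L_g,L_b,L_t$ (Euclidean norm on vectors; on $p$-th order tensors $\|A\|_{[p]}=\max_{\|\mathbf{h}_1\|=\dots=\|\mathbf{h}_p\|=1}|A[\mathbf{h}_1,\dots,\mathbf{h}_p]|$). For a third-order tensor $T$: $T[\mathbf{s}]^2=(\sum_{j,k}T_{ijk}s_js_k)_i$, $T[\mathbf{s}]^3=\sum_{i,j,k}T_{ijk}s_is_js_k$. Sampled estimates: $\mathbf{g}_k=\frac{1}{|\mathcal{S}^g|}\sum_{i\in\mathcal{S}^g}\nabla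 f_i(\mathbf{x}_k)$, $\mathbf{B}_k=\frac{1}{|\mathcal{S}^b|}\sum_{i\in\mathcal{S}^b}\nabla^2 f_i(\mathbf{x}_k)$, $\mathbf{T}_k=\frac{1}{|\mathcal{S}^t|}\sum_{i\in\mathcal{S}^t}\nabla^3 f_i(\mathbf{x}_k)$ for index sets $\mathcal{S}^g,\mathcal{S}^b,\mathcal{S}^t\subseteq\{1,\dots,n\}$. Model: $\phi_k(\mathbf{s})=f(\mathbf{x}_k)+\mathbf{g}_k^\top\mathbf{s}+\frac12\mathbf{s}^\top\mathbf{B}_k\mathbf{s}+\frac16\mathbf{T}_k[\mathbf{s}]^3$, $m_k(\mathbf{s})=\phi_k(\mathbf{s})+\frac{\sigma_k}{4}\|\mathbf{s}\|^4$. Sampling condition (accuracy $\epsilon$, constants $\kappa_g,\kappa_b,\kappa_t$): $\|\mathbf{g}_k-\nabla f(\mathbf{x}_k)\|\le\kappa_g\epsilon$; $\|(\mathbf{B}_k-\nabla^2 f(\mathbf{x}_k))\mathbf{s}\|\le\kappa_b\epsilon^{2/3}\|\mathbf{s}\|$ and $\|\mathbf{T}_k[\mathbf{s}]^2-\nabla^3 f(\mathbf{x}_k)[\mathbf{s}]^2\|\le\kappa_t\epsilon^{1/3}\|\mathbf{s}\|^2$ for all $\mathbf{s}\in\mathbb{R}^d$. Approximate minimization condition (constants $\theta>0,\zeta>0$): $m_k(\mathbf{s}_k)<m_k(\mathbf{0})$ and $\chi_{m,i}(\mathbf{x}_k,\mathbf{s}_k)\le\theta\|\mathbf{s}_k\|^{4-i}$,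 $i=1,2,3$, with $\chi_{m,1}=\|\nabla m_k(\mathbf{s})\|$, $\chi_{m,2}=\max(0,-\lambda_{min}(\nabla^2 m_k(\mathbf{s})))$, $\chi_{m,3}=\max\{|\nabla^3 m_k(\mathbf{s})[\mathbf{y}]^3|:\|\mathbf{y}\|=1,|\mathbf{y}^\top\nabla^2 m_k(\mathbf{s})\mathbf{y}|\le\zeta\}$ (empty maximum $=0$). Criticality: $\chi_{f,1}(\mathbf{x})=\|\nabla f(\mathbf{x})\|$. *)

From HB Require Import structures.
From mathcomp Require Import all_boot all_order all_algebra.
From mathcomp Require Import all_classical all_reals all_analysis.
Set Implicit Arguments. Unset Strict Implicit. Unset Printing Implicit Defensive.
Import Order.TTheory GRing.Theory Num.Theory.
Import numFieldNormedType.Exports.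
Local Open Scope classical_set_scope.
Local Open Scope ring_scope.

Section Defs.
Variables (R : realType) (d : nat).

Notation vec := 'rV[R]_d.
Definition tens := 'I_d -> 'I_d -> 'I_d -> R.

Definition dotv (u v : vec) : R := \sum_(j < d) u 0 j * v 0 j.
Definition enorm (v : vec) : R := Num.sqrt (dotv v v).
Definition matvec (B : 'M[R]_d) (s : vec) : vec := s *m B^T.
Definition quad (B : 'M[R]_d) (s : vec) : R := dotv s (matvec B s).
Definition tens3 (A : tens) (h1 h2 h3 : vec) : R :=
  \sum_(i < d) \sum_(j < d) \sum_(k < d) A i j k * h1 0 i * h2 0 j * h3 0 k.
Definition tens_sq (A : tens) (s : vec) : vec :=
  \row_(i < d) \sum_(j < d) \sum_(k < d) A i j k * s 0 j * s 0 k.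
Definition tens_cube (A : tens) (s : vec) : R := tens3 A s s s.
Definition tens_app (A : tens) (v : vec) : 'M[R]_d :=
  \matrix_(i < d, j < d) \sum_(k < d) A i j k * v 0 k.
Definition tens_sub (A B : tens) : tens := fun i j k => A i j k - B i j k.

Definition is_grad (f : vec -> R) (G : vec -> vec) :=
  forall x v : vec, is_derive x v f (dotv (G x) v).
Definition is_hess (G : vec -> vec) (H : vec -> 'M[R]_d) :=
  forall x v : vec, is_derive x v G (matvec (H x) v).
Definition is_third (H : vec -> 'M[R]_d) (T : vec -> tens) :=
  forall x v : vec, is_derive x v H (tens_app (T x) v).

(* Lipschitz conditions, with the Euclidean norm on vectors and the
   norm ||A||_[p] = max_{||h_i||=1} |A[h_1,..,h_p]| on tensors, unfolded *)
Definition lip0 (f : vec -> R) (L : R) :=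
  forall x y : vec, `|f x - f y| <= L * enorm (x - y).
Definition lip1 (G : vec -> vec) (L : R) :=
  forall x y : vec, enorm (G x - G y) <= L * enorm (x - y).
Definition lip2 (H : vec -> 'M[R]_d) (L : R) :=
  forall x y h1 h2 : vec, enorm h1 = 1 -> enorm h2 = 1 ->
    `|dotv h1 (matvec (H x - H y) h2)| <= L * enorm (x - y).
Definition lip3 (T : vec -> tens) (L : R) :=
  forall x y h1 h2 h3 : vec, enorm h1 = 1 -> enorm h2 = 1 -> enorm h3 = 1 ->
    `|tens3 (tens_sub (T x) (T y)) h1 h2 h3| <= L * enorm (x - y).

Definition lambda_min (A : 'M[R]_d) : R := inf [set a : R | eigenvalue A a].

Definition chi_m1 (Dm1 : vec) : R := enorm Dm1.
Definition chi_m2 (Dm2 : 'M[R]_d) : R := Num.max 0 (- lambda_min Dm2).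
(* max over an empty set is 0, as sup set0 = 0 *)
Definition chi_m3 (zeta : R) (Dm2 : 'M[R]_d) (Dm3 : tens) : R :=
  sup [set `|tens_cube Dm3 y| | y in
        [set y : vec | enorm y = 1 /\ `|quad Dm2 y| <= zeta]].

Definition avg_s {n : nat} (S : {set 'I_n}) (F : 'I_n -> R) : R :=
  #|S|%:R^-1 * \sum_(i in S) F i.
Definition avg_v {n : nat} (S : {set 'I_n}) (F : 'I_n -> vec) : vec :=
  #|S|%:R^-1 *: \sum_(i in S) F i.
Definition avg_m {n : nat} (S : {set 'I_n}) (F : 'I_n -> 'M[R]_d) : 'M[R]_d :=
  #|S|%:R^-1 *: \sum_(i in S) F i.
Definition avg_t {n : nat} (S : {set 'I_n}) (F : 'I_n -> tens) : tens :=
  fun a b c => #|S|%:R^-1 * \sum_(i in S) F i a b c.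

End Defs.

Definition cbrt {R : realType} (x : R) : R :=
  if 0 <= x then powR x (1/3) else - powR (- x) (1/3).

(* Let [w] be the unit vector along [grad f(x_k + s_k)].  Taylor's formula for
   [grad f], whose derivative [D^3 f] is [L_t]-Lipschitz, gives
     <w, grad f(x_k + s_k)> <= <w, grad f(x_k) + D^2 f(x_k) s_k + D^3 f(x_k)[s_k]^2 / 2>
                               + L_t/6 |s_k|^3.
   Replacing the exact derivatives by the samples costs at most
   eps/4 + eps^(2/3) |s_k| / 4 + eps^(1/3) |s_k|^2 / 4 <= eps/2 + |s_k|^3 / 4
   (by AM-GM), and the sampled expression is
   <grad m_k(s_k), w> - sigma_k |s_k|^2 <s_k, w> <= (theta + sigma_k) |s_k|^3 by the
   first-order part of the approximate minimization condition (the only part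
   needed).  Hence |grad f(x_k + s_k)| - eps/2 <= kappa_k |s_k|^3, which is the
   claim after taking cube roots.  Reading off
   [grad m_k] requires [B_k] and [T_k] to be symmetric, which follows from Schwarz's
   theorem for the [f_i], whose second and third derivatives are Lipschitz. *)
From HB Require Import structures.
From mathcomp Require Import all_boot all_order all_algebra.
From mathcomp Require Import all_classical all_reals all_analysis.
From mathcomp Require Import ring lra.
Set Implicit Arguments. Unset Strict Implicit. Unset Printing Implicit Defensive.
Import Order.TTheory GRing.Theory Num.Theory.
Import numFieldNormedType.Exports.
Local Open Scope classical_set_scope.
Local Open Scope ring_scope.

Section EuclideanSpace.
Variables (R : realType) (d : nat).
Local Notation vec := 'rV[R]_d.
Implicit Types (u v w : vec) (A : tens R d) (M : 'M[R]_d).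

Lemma dotvC u v : dotv u v = dotv v u.
Proof. by apply: eq_bigr => j _; rewrite mulrC. Qed.

Lemma dotvDr u v w : dotv u (v + w) = dotv u v + dotv u w.
Proof. by rewrite /dotv -big_split; apply: eq_bigr => j _; rewrite mxE mulrDr. Qed.

Lemma dotvZr u v (k : R) : dotv u (k *: v) = k * dotv u v.
Proof. by rewrite /dotv mulr_sumr; apply: eq_bigr => j _; rewrite mxE mulrCA. Qed.

Lemma dotvNr u v : dotv u (- v) = - dotv u v.
Proof. by rewrite -scaleN1r dotvZr mulN1r. Qed.

Lemma dotvBr u v w : dotv u (v - w) = dotv u v - dotv u w.
Proof. by rewrite dotvDr dotvNr. Qed.

Lemma dotv0r u : dotv u 0 = 0.
Proof. by rewrite -(scale0r 0) dotvZr mul0r. Qed.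

Lemma dotvDl u v w : dotv (v + w) u = dotv v u + dotv w u.
Proof. by rewrite dotvC dotvDr !(dotvC u). Qed.

Lemma dotvZl u v (k : R) : dotv (k *: u) v = k * dotv u v.
Proof. by rewrite dotvC dotvZr dotvC. Qed.

Lemma dotvBl u v w : dotv (v - w) u = dotv v u - dotv w u.
Proof. by rewrite dotvC dotvBr !(dotvC u). Qed.

Lemma dotvv_ge0 v : 0 <= dotv v v.
Proof. by apply: sumr_ge0 => j _; rewrite -expr2 sqr_ge0. Qed.

Lemma dotvv_eq0 v : (dotv v v == 0) = (v == 0).
Proof.
apply/idP/eqP => [|->]; last by rewrite dotv0r.
rewrite psumr_eq0 => [/allP vv0|j _]; last by rewrite -expr2 sqr_ge0.
apply/matrixP => i j; rewrite (ord1 i) mxE.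
by have := vv0 j (mem_index_enum _); rewrite -expr2 sqrf_eq0 => /eqP.
Qed.

Lemma enorm_ge0 v : 0 <= enorm v.
Proof. exact: sqrtr_ge0. Qed.

Lemma sqr_enorm v : enorm v ^+ 2 = dotv v v.
Proof. by rewrite sqr_sqrtr // dotvv_ge0. Qed.

Lemma enorm_eq0 v : (enorm v == 0) = (v == 0).
Proof. by rewrite -(sqrf_eq0 (enorm v)) sqr_enorm dotvv_eq0. Qed.

Lemma enorm_gt0 v : (0 < enorm v) = (v != 0).
Proof. by rewrite lt_def enorm_eq0 enorm_ge0 andbT. Qed.

Lemma enorm0 : enorm (0 : vec) = 0.
Proof. by apply/eqP; rewrite enorm_eq0. Qed.

Lemma enormZ (k : R) v : enorm (k *: v) = `|k| * enorm v.
Proof. by rewrite /enorm dotvZl dotvZr mulrA -expr2 sqrtrM ?sqr_ge0 // sqrtr_sqr. Qed.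

Lemma enormN v : enorm (- v) = enorm v.
Proof. by rewrite -scaleN1r enormZ normrN1 mul1r. Qed.

Lemma enorm_normalize v : v != 0 -> enorm ((enorm v)^-1 *: v) = 1.
Proof.
by move=> v0; rewrite enormZ ger0_norm ?invr_ge0 ?enorm_ge0 // mulVf // gt_eqF ?enorm_gt0.
Qed.

Lemma dotv_le_enorm u v : dotv u v <= enorm u * enorm v.
Proof.
have [->|u0] := eqVneq u 0; first by rewrite dotvC dotv0r enorm0 mul0r.
have [->|v0] := eqVneq v 0; first by rewrite dotv0r enorm0 mulr0.
have ab_gt0 : 0 < enorm u * enorm v by rewrite mulr_gt0 ?enorm_gt0.
(* expand [0 <= |b u - a v|^2 = 2 a b (a b - <u, v>)] with [a = |u|], [b = |v|] *)
have := dotvv_ge0 (enorm v *: u - enorm u *: v).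
rewrite dotvBl !dotvBr !dotvZl !dotvZr -!sqr_enorm (dotvC v u).
nra.
Qed.

Lemma normr_dotv_le u v : `|dotv u v| <= enorm u * enorm v.
Proof.
rewrite ler_norml dotv_le_enorm andbT lerNl -dotvNr.
by rewrite -[enorm v](enormN v) dotv_le_enorm.
Qed.

Lemma ler_enormD u v : enorm (u + v) <= enorm u + enorm v.
Proof.
rewrite -(@ler_pXn2r _ 2) ?nnegrE ?addr_ge0 ?enorm_ge0 // sqrrD !sqr_enorm.
rewrite dotvDl !dotvDr (dotvC v u); have := dotv_le_enorm u v; lra.
Qed.

Lemma sum_mul_delta (F : 'I_d -> R) j : \sum_(k < d) F k * (delta_mx 0 j : vec) 0 k = F j.
Proof.
rewrite (bigD1 j) //= big1 ?addr0 => [|k kj]; first by rewrite mxE !eqxx mulr1.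
by rewrite mxE eqxx (negbTE kj) mulr0.
Qed.

Lemma dotv_deltar j v : dotv v (delta_mx 0 j) = v 0 j.
Proof. exact: sum_mul_delta. Qed.

Lemma dotv_deltal j v : dotv (delta_mx 0 j) v = v 0 j.
Proof. by rewrite dotvC dotv_deltar. Qed.

Lemma enorm_delta j : enorm (delta_mx 0 j : vec) = 1.
Proof. by rewrite /enorm dotv_deltal mxE !eqxx sqrtr1. Qed.

Lemma matvecE M v i : matvec M v 0 i = \sum_(j < d) M i j * v 0 j.
Proof. by rewrite /matvec mxE; apply: eq_bigr => j _; rewrite mxE mulrC. Qed.

Lemma matvec_delta M i j : matvec M (delta_mx 0 j) 0 i = M i j.
Proof. by rewrite matvecE sum_mul_delta. Qed.

Lemma matvecB (M N : 'M[R]_d) v : matvec (M - N) v = matvec M v - matvec N v.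
Proof. by rewrite /matvec linearB /= mulmxBr. Qed.

Lemma dotv_matvec u M v :
  dotv u (matvec M v) = \sum_(i < d) \sum_(j < d) M i j * (u 0 i * v 0 j).
Proof.
apply: eq_bigr => i _; rewrite matvecE mulr_sumr.
by apply: eq_bigr => j _; rewrite mulrCA mulrA [_ * u 0 i]mulrC -mulrA.
Qed.

Lemma tens3_delta A i j k :
  tens3 A (delta_mx 0 i) (delta_mx 0 j) (delta_mx 0 k) = A i j k.
Proof.
rewrite /tens3.
under eq_bigr do under eq_bigr do rewrite sum_mul_delta.
by under eq_bigr do rewrite sum_mul_delta; rewrite sum_mul_delta.
Qed.

Lemma tens_app_delta A i j k : tens_app A (delta_mx 0 k) i j = A i j k.
Proof. by rewrite mxE sum_mul_delta. Qed.

Lemma tens3_sq A u v : tens3 A u v v = dotv u (tens_sq A v).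
Proof.
apply: eq_bigr => i _; rewrite mxE mulr_sumr.
apply: eq_bigr => j _; rewrite mulr_sumr; apply: eq_bigr => k _; ring.
Qed.

Lemma tens3_sub A B u v w : tens3 (tens_sub A B) u v w = tens3 A u v w - tens3 B u v w.
Proof.
rewrite /tens3 -sumrB; apply: eq_bigr => i _; rewrite -sumrB.
by apply: eq_bigr => j _; rewrite -sumrB; apply: eq_bigr => k _; rewrite /tens_sub; ring.
Qed.

Lemma tens3Z A u v (k : R) : tens3 A u (k *: v) (k *: v) = k ^+ 2 * tens3 A u v v.
Proof.
rewrite /tens3 mulr_sumr; apply: eq_bigr => i _; rewrite mulr_sumr.
by apply: eq_bigr => j _; rewrite mulr_sumr; apply: eq_bigr => l _; rewrite !mxE; ring.
Qed.

Lemma dotv_tens_app A u v : dotv u (matvec (tens_app A v) v) = tens3 A u v v.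
Proof.
rewrite dotv_matvec; apply: eq_bigr => i _; apply: eq_bigr => j _.
by rewrite mxE mulr_suml; apply: eq_bigr => k _; ring.
Qed.

End EuclideanSpace.

Section DirectionalDerivatives.
Variables (R : realType) (V : normedModType R).
Implicit Types (f g : V -> R) (x v : V).

Lemma is_derive_entry m n (M : V -> 'M[R]_(m, n)) x v (dM : 'M[R]_(m, n)) i j :
  is_derive x v M dM -> is_derive x v (fun y => M y i j) (dM i j).
Proof.
move=> [dM_derivable <-].
have := (derivable_mxP M x v).1 dM_derivable i j => dMij.
by split => //; rewrite derive_mx // mxE.
Qed.

Lemma is_derive_sumr k (h : 'I_k -> V -> R) x v (dh : 'I_k -> R) :
  (forall i, is_derive x v (h i) (dh i)) ->
  is_derive x v (fun y => \sum_(i < k) h i y) (\sum_(i < k) dh i).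
Proof. by move=> dh_i; have := is_derive_sum dh_i; rewrite fct_sumE. Qed.

Lemma is_derive_cmul f (c : R) x v df :
  is_derive x v f df -> is_derive x v (fun y => c * f y) (c * df).
Proof. by move=> df_x; have := is_deriveZ c df_x. Qed.

Lemma is_derive_mulc f (c : R) x v df :
  is_derive x v f df -> is_derive x v (fun y => f y * c) (df * c).
Proof.
move=> /(is_derive_cmul c); rewrite mulrC.
by under eq_fun do rewrite mulrC.
Qed.

Lemma is_derive_mul f g x v df dg :
  is_derive x v f df -> is_derive x v g dg ->
  is_derive x v (fun y => f y * g y) (f x * dg + g x * df).
Proof. by move=> df_x dg_x; have := is_deriveM df_x dg_x. Qed.

Lemma is_derive_add f g x v df dg :
  is_derive x v f df -> is_derive x v g dg ->
  is_derive x v (fun y => f y + g y) (df + dg).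
Proof. by move=> df_x dg_x; have := is_deriveD df_x dg_x. Qed.

Lemma is_derive_sub f g x v df dg :
  is_derive x v f df -> is_derive x v g dg ->
  is_derive x v (fun y => f y - g y) (df - dg).
Proof. by move=> df_x dg_x; have := is_deriveB df_x dg_x. Qed.

Lemma is_derive_ext f g x v df :
  f =1 g -> is_derive x v f df -> is_derive x v g df.
Proof. by move=> /funext ->. Qed.

Lemma is_derive_line (W : normedModType R) (F : V -> W) y v (t : R) dF :
  is_derive (y + t *: v) v F dF ->
  is_derive t (1 : R) (fun s : R => F (y + s *: v)) dF.
Proof.
move=> [F_derivable F_derive].
have quotientsE :
    (fun h : R => h^-1 *: (((fun s => F (y + s *: v)) \o shift t) (h *: 1)
                           - F (y + t *: v)))
  = (fun h : R => h^-1 *: ((F \o shift (y + t *: v)) (h *: v) - F (y + t *: v))).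
  apply/funext => h /=; congr (_ *: (F _ - _)).
  by rewrite [h%:A]mulr1 scalerDl addrCA.
by split; rewrite /derivable /derive quotientsE.
Qed.

End DirectionalDerivatives.

Section RealLine.
Variable R : realType.
Implicit Types (phi dphi : R -> R).

Lemma is_derive_pow n (t : R) :
  is_derive t (1 : R) (fun s : R => s ^+ n.+1) (n.+1%:R * t ^+ n).
Proof.
split; first exact: exprn_derivable.
by rewrite exp_derive /= [_ *: 1]mulr1.
Qed.

Lemma MVT_everywhere phi dphi (a b : R) : a <= b ->
  (forall t, is_derive t (1 : R) phi (dphi t)) ->
  exists2 c, a <= c <= b & phi b - phi a = dphi c * (b - a).
Proof.
move=> ab dphi_t.
have phi_cont : {within `[a, b], continuous phi}%classic.
  by apply: derivable_within_continuous => t _; case: (dphi_t t).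
have [c] := MVT_segment ab (fun t _ => dphi_t t) phi_cont.
by rewrite in_itv /=; exists c.
Qed.

Lemma ler_sub_derive_pow phi dphi (c : R) k (t : R) :
  (forall s, is_derive s (1 : R) phi (dphi s)) ->
  (forall s, 0 <= s <= t -> dphi s <= c * s ^+ k) -> 0 <= t ->
  phi t - phi 0 <= c / k.+1%:R * t ^+ k.+1.
Proof.
move=> dphi_s dphi_le t_ge0.
pose h s := phi s - c / k.+1%:R * s ^+ k.+1.
have dh s : is_derive s (1 : R) h (dphi s - c * s ^+ k).
  apply: is_derive_eq (is_derive_sub (dphi_s s) (is_derive_cmul _ (is_derive_pow k s))) _.
  by rewrite mulrA divfK // pnatr_eq0.
have : h t - h 0 <= 0.
  have [xi /andP[xi_ge0 xi_le] ->] := MVT_everywhere t_ge0 dh.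
  by rewrite mulr_le0_ge0 ?subr_ge0 // subr_le0 dphi_le ?xi_ge0.
by rewrite /h expr0n /= mulr0 subr0 addrAC subr_le0.
Qed.

Lemma ler_normB_derive_pow phi dphi (c : R) k (t : R) :
  (forall s, is_derive s (1 : R) phi (dphi s)) ->
  (forall s, 0 <= s <= t -> `|dphi s| <= c * s ^+ k) -> 0 <= t ->
  `|phi t - phi 0| <= c / k.+1%:R * t ^+ k.+1.
Proof.
move=> dphi_s dphi_le t_ge0; rewrite ler_norml; apply/andP; split.
  rewrite lerNl opprB.
  have dNphi s : is_derive s (1 : R) (fun s => - phi s) (- dphi s).
    by have := is_deriveN (dphi_s s).
  have := ler_sub_derive_pow dNphi _ t_ge0; rewrite opprK addrC; apply => s /dphi_le.
  by rewrite ler_norml => /andP[]; rewrite lerNl.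
apply: ler_sub_derive_pow dphi_s _ t_ge0 => s /dphi_le.
by rewrite ler_norml => /andP[].
Qed.

End RealLine.

Section InnerProductDerivatives.
Variables (R : realType) (d : nat) (V : normedModType R).
Local Notation vec := 'rV[R]_d.

Lemma is_derive_dotvr (F : V -> vec) x v dF (w : vec) :
  is_derive x v F dF -> is_derive x v (fun y => dotv w (F y)) (dotv w dF).
Proof.
move=> dF_x; apply: is_derive_sumr => j.
exact: is_derive_cmul (is_derive_entry 0 j dF_x).
Qed.

Lemma is_derive_dotv_matvec (M : V -> 'M[R]_d) x v dM (u w : vec) :
  is_derive x v M dM ->
  is_derive x v (fun y => dotv u (matvec (M y) w)) (dotv u (matvec dM w)).
Proof.
move=> dM_x; apply: is_derive_ext (fun y => esym (dotv_matvec u (M y) w)) _.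
rewrite dotv_matvec; apply: is_derive_sumr => i; apply: is_derive_sumr => j.
exact: is_derive_mulc (is_derive_entry i j dM_x).
Qed.

Lemma is_derive_dotv (F G : V -> vec) x v dF dG :
  is_derive x v F dF -> is_derive x v G dG ->
  is_derive x v (fun y => dotv (F y) (G y)) (dotv dF (G x) + dotv (F x) dG).
Proof.
move=> dF_x dG_x.
have -> : dotv dF (G x) + dotv (F x) dG
          = \sum_(j < d) (F x 0 j * dG 0 j + G x 0 j * dF 0 j).
  by rewrite addrC -big_split; apply: eq_bigr => j _; rewrite [G x 0 j * _]mulrC.
apply: is_derive_sumr => j.
exact: is_derive_mul (is_derive_entry 0 j dF_x) (is_derive_entry 0 j dG_x).
Qed.

End InnerProductDerivatives.

Section SymmetryOfDerivatives.
Variables (R : realType) (d : nat).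
Local Notation vec := 'rV[R]_d.
Implicit Types (phi p q r s : vec -> R) (u w x : vec).

Lemma second_difference_mvt phi p r u w x (l : R) : 0 <= l ->
  (forall y, is_derive y u phi (p y)) -> (forall y, is_derive y w p (r y)) ->
  exists a b, [/\ 0 <= a <= l, 0 <= b <= l &
    phi (x + l *: u + l *: w) - phi (x + l *: u) - phi (x + l *: w) + phi x
      = r (x + a *: u + b *: w) * (l * l)].
Proof.
move=> l_ge0 dphi dp.
pose D t := phi (x + l *: w + t *: u) - phi (x + t *: u).
have dD t : is_derive t (1 : R) D (p (x + l *: w + t *: u) - p (x + t *: u)).
  by apply: is_derive_sub; apply: is_derive_line.
have [a a_in eD] := MVT_everywhere l_ge0 dD.
pose E t := p (x + a *: u + t *: w).
have dE t : is_derive t (1 : R) E (r (x + a *: u + t *: w)) by apply: is_derive_line.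
have [b b_in eE] := MVT_everywhere l_ge0 dE.
exists a, b; split => //.
have -> : phi (x + l *: u + l *: w) - phi (x + l *: u) - phi (x + l *: w) + phi x
          = D l - D 0.
  by rewrite /D scale0r !addr0 (addrAC x (l *: w)); ring.
rewrite eD subr0 (_ : p (x + l *: w + a *: u) - p (x + a *: u) = E l - E 0).
  by rewrite eE subr0 mulrA.
by rewrite /E scale0r addr0 (addrAC x (l *: w)).
Qed.

Lemma enorm_scaleD_le u w (a b l : R) : 0 <= a <= l -> 0 <= b <= l ->
  enorm (a *: u + b *: w) <= l * (enorm u + enorm w).
Proof.
move=> /andP[a_ge0 a_le] /andP[b_ge0 b_le].
apply: le_trans (ler_enormD _ _) _.
rewrite !enormZ !ger0_norm // mulrDr.
by apply: lerD; apply: ler_wpM2r; rewrite ?enorm_ge0.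
Qed.

(* Both second differences equal [l^2] times a mixed derivative at a point
   [O(l)] away from [x]; let [l] tend to [0]. *)
Lemma mixed_derivatives_eq phi p q r s u w x (L : R) :
  (forall y, is_derive y u phi (p y)) -> (forall y, is_derive y w phi (q y)) ->
  (forall y, is_derive y w p (r y)) -> (forall y, is_derive y u q (s y)) ->
  (forall y, `|r y - r x| <= L * enorm (y - x)) ->
  (forall y, `|s y - s x| <= L * enorm (y - x)) ->
  r x = s x.
Proof.
move=> dphi_u dphi_w dp dq r_lip s_lip.
set K := 2 * `|L| * (enorm u + enorm w).
have K_ge0 : 0 <= K by rewrite !mulr_ge0 ?addr_ge0 ?enorm_ge0.
have near_x y c (l : R) : y = x + c -> enorm c <= l * (enorm u + enorm w) ->
    L * enorm (y - x) <= `|L| * (l * (enorm u + enorm w)).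
  move=> -> c_le; rewrite addrAC subrr add0r.
  by apply: le_trans (ler_wpM2r (enorm_ge0 _) (ler_norm L)) (ler_wpM2l _ c_le).
have rs_le l : 0 < l -> `|r x - s x| <= K * l.
  move=> l_gt0.
  have [a [b [a_in b_in eqr]]] := second_difference_mvt x (ltW l_gt0) dphi_u dp.
  have [b' [a' [b'_in a'_in eqs]]] := second_difference_mvt x (ltW l_gt0) dphi_w dq.
  have rs_eq : r (x + a *: u + b *: w) = s (x + b' *: w + a' *: u).
    apply: (mulIf (mulf_neq0 (lt0r_neq0 l_gt0) (lt0r_neq0 l_gt0))).
    by rewrite -eqr -eqs !(addrAC x (l *: w)); ring.
  have -> : r x - s x = - (r (x + a *: u + b *: w) - r x)
                        + (s (x + b' *: w + a' *: u) - s x) by rewrite rs_eq; ring.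
  apply: le_trans (ler_normD _ _) _; rewrite normrN.
  have -> : K * l = `|L| * (l * (enorm u + enorm w)) + `|L| * (l * (enorm u + enorm w)).
    by rewrite /K; ring.
  apply: lerD; [apply: le_trans (r_lip _) _ | apply: le_trans (s_lip _) _].
    by apply: near_x (enorm_scaleD_le _ _ a_in b_in); rewrite addrA.
  by apply: near_x (enorm_scaleD_le _ _ a'_in b'_in); rewrite -addrA (addrC (b' *: w)).
apply/eqP; rewrite -subr_eq0 -normr_le0; apply/ler_addgt0Pr => e e_gt0.
have K1_gt0 : 0 < K + 1 by rewrite ltr_wpDl.
apply: le_trans (rs_le _ (divr_gt0 e_gt0 K1_gt0)) _.
rewrite add0r mulrCA -[leRHS]mulr1 ler_wpM2l ?(ltW e_gt0) //.
by rewrite ler_pdivrMr // mul1r lerDl ler01.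
Qed.

Lemma is_hess_sym (f : vec -> R) G H (L : R) :
  is_grad f G -> is_hess G H -> lip2 H L -> forall y i j, H y i j = H y j i.
Proof.
move=> dG dH H_lip x i j.
have dG_entry k y : is_derive y (delta_mx 0 k) f (G y 0 k).
  by apply: is_derive_eq (dG y _) _; rewrite dotv_deltar.
have dH_entry k l y : is_derive y (delta_mx 0 l) (fun z => G z 0 k) (H y k l).
  by apply: is_derive_eq (is_derive_entry 0 k (dH y _)) _; rewrite matvec_delta.
have H_lip_entry k l y : `|H y k l - H x k l| <= L * enorm (y - x).
  have := H_lip y x _ _ (enorm_delta _ k) (enorm_delta _ l).
  by rewrite dotv_deltal matvec_delta !mxE.
exact: mixed_derivatives_eq (dG_entry i) (dG_entry j) (dH_entry i j) (dH_entry j i)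
  (H_lip_entry i j) (H_lip_entry j i).
Qed.

Lemma is_third_sym23 (G : vec -> vec) H T (L : R) :
  is_hess G H -> is_third H T -> lip3 T L -> forall y i j k, T y i j k = T y i k j.
Proof.
move=> dH dT T_lip x i j k.
have dH_entry l y : is_derive y (delta_mx 0 l) (fun z => G z 0 i) (H y i l).
  by apply: is_derive_eq (is_derive_entry 0 i (dH y _)) _; rewrite matvec_delta.
have dT_entry l m y : is_derive y (delta_mx 0 m) (fun z => H z i l) (T y i l m).
  by apply: is_derive_eq (is_derive_entry i l (dT y _)) _; rewrite tens_app_delta.
have T_lip_entry l m y : `|T y i l m - T x i l m| <= L * enorm (y - x).
  have := T_lip y x _ _ _ (enorm_delta _ i) (enorm_delta _ l) (enorm_delta _ m).
  by rewrite tens3_delta.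
exact: mixed_derivatives_eq (dH_entry j) (dH_entry k) (dT_entry j k) (dT_entry k j)
  (T_lip_entry j k) (T_lip_entry k j).
Qed.

Lemma is_third_sym12 (H : vec -> 'M[R]_d) T :
  (forall y i j, H y i j = H y j i) -> is_third H T ->
  forall y i j k, T y i j k = T y j i k.
Proof.
move=> H_sym dT y i j k.
have H_swap : (fun z => H z i j) = (fun z => H z j i) by apply/funext => z; exact: H_sym.
rewrite -(tens_app_delta (T y) i j k) -(tens_app_delta (T y) j i k).
have [_ <-] := is_derive_entry i j (dT y (delta_mx 0 k)).
by have [_ <-] := is_derive_entry j i (dT y (delta_mx 0 k)); rewrite H_swap.
Qed.

End SymmetryOfDerivatives.

Section GradientTaylor.
Variables (R : realType) (d : nat).
Local Notation vec := 'rV[R]_d.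

Definition grad_taylor_rem (G : vec -> vec) (H : vec -> 'M[R]_d) (T : vec -> tens R d)
    (x s w : vec) : R :=
  dotv w (G (x + s)) - dotv w (G x) - dotv w (matvec (H x) s) - 2^-1 * tens3 (T x) w s s.

Variables (G : vec -> vec) (H : vec -> 'M[R]_d) (T : vec -> tens R d) (L : R).
Hypotheses (dH : is_hess G H) (dT : is_third H T) (T_lip : lip3 T L).
Variables (x s w : vec).
Hypothesis w_unit : enorm w = 1.

Lemma lip3_tens3_le y :
  `|tens3 (T y) w s s - tens3 (T x) w s s| <= L * enorm (y - x) * enorm s ^+ 2.
Proof.
have [->|s_neq0] := eqVneq s 0.
  have tens3_w00 A : tens3 A w 0 0 = 0.
    by rewrite -(scale0r (0 : vec)) tens3Z expr0n mul0r.
  by rewrite !tens3_w00 subrr normr0 enorm0 expr0n /= mulr0.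
set u := (enorm s)^-1 *: s.
have s_eq : s = enorm s *: u by rewrite scalerA mulfV ?scale1r // gt_eqF ?enorm_gt0.
have u_unit : enorm u = 1 := enorm_normalize s_neq0.
have := T_lip y x w_unit u_unit u_unit; rewrite tens3_sub => Tu_le.
have tens3_u A : tens3 A w s s = enorm s ^+ 2 * tens3 A w u u by rewrite -tens3Z -s_eq.
rewrite !tens3_u -mulrBr normrM ger0_norm ?sqr_ge0 // mulrC.
by apply: ler_wpM2r; rewrite ?sqr_ge0.
Qed.

Lemma hess_taylor_le t : 0 <= t ->
  `|dotv w (matvec (H (x + t *: s)) s) - dotv w (matvec (H x) s) - t * tens3 (T x) w s s|
    <= L * enorm s ^+ 3 / 2 * t ^+ 2.
Proof.
move=> t_ge0.
pose psi tau := dotv w (matvec (H (x + tau *: s)) s) - tau * tens3 (T x) w s s.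
have dpsi tau :
    is_derive tau (1 : R) psi (tens3 (T (x + tau *: s)) w s s - tens3 (T x) w s s).
  apply: is_derive_sub.
    apply: (is_derive_line (F := fun y => dotv w (matvec (H y) s))).
    by rewrite -dotv_tens_app; apply: is_derive_dotv_matvec.
  exact: is_derive_eq (is_derive_mulc _ (is_derive_id tau 1)) (mul1r _).
have := ler_normB_derive_pow (c := L * enorm s ^+ 3) (k := 1) dpsi _ t_ge0.
rewrite /psi scale0r addr0 mul0r subr0 addrAC.
apply => tau /andP[tau_ge0 _]; apply: le_trans (lip3_tens3_le _) _.
by rewrite addrAC subrr add0r enormZ ger0_norm // expr1 exprSr; lra.
Qed.

Lemma grad_taylor_rem_le : `|grad_taylor_rem G H T x s w| <= L / 6 * enorm s ^+ 3.
Proof.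
set A := dotv w (matvec (H x) s); set B := tens3 (T x) w s s.
pose phi t := dotv w (G (x + t *: s)) - t * A - t ^+ 2 * (B / 2).
have dphi t : is_derive t (1 : R) phi
    (dotv w (matvec (H (x + t *: s)) s) - A - t * B).
  apply: (is_derive_eq (f' := dotv w (matvec (H (x + t *: s)) s) - A
                               - 2%:R * t ^+ 1 * (B / 2))).
    apply: is_derive_sub; first apply: is_derive_sub.
    - apply: (is_derive_line (F := fun y => dotv w (G y))).
      exact: is_derive_dotvr.
    - exact: is_derive_eq (is_derive_mulc _ (is_derive_id t 1)) (mul1r _).
    - exact: is_derive_mulc _ (is_derive_pow 1 t).
  by rewrite expr1; field.
have := ler_normB_derive_pow (k := 2) dphi (fun t t_in => hess_taylor_le (andP t_in).1) ler01.
have -> : phi 1 - phi 0 = grad_taylor_rem G H T x s w.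
  by rewrite /phi /grad_taylor_rem scale1r scale0r addr0 -/A -/B; field.
by rewrite (_ : L * _ / 2 / 3 * 1 ^+ 3 = L / 6 * enorm s ^+ 3) //; field.
Qed.

End GradientTaylor.

Section Averages.
Variables (R : realType) (d n : nat) (S : {set 'I_n}).
Local Notation vec := 'rV[R]_d.
Local Notation c := (#|S|%:R^-1 : R).

Lemma dotv_sumr (I : finType) (P : pred I) (w : vec) (F : I -> vec) :
  dotv w (\sum_(i | P i) F i) = \sum_(i | P i) dotv w (F i).
Proof.
rewrite /dotv exchange_big /=; apply: eq_bigr => j _.
by rewrite summxE mulr_sumr.
Qed.

Lemma dotv_avg_v (w : vec) (F : 'I_n -> vec) :
  dotv w (avg_v S F) = c * \sum_(i in S) dotv w (F i).
Proof. by rewrite /avg_v dotvZr dotv_sumr. Qed.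

Lemma avg_mE (F : 'I_n -> 'M[R]_d) i j : avg_m S F i j = c * \sum_(l in S) F l i j.
Proof. by rewrite /avg_m mxE summxE. Qed.

Lemma avg_m_eq (F : 'I_n -> 'M[R]_d) i j i' j' :
  (forall l, F l i j = F l i' j') -> avg_m S F i j = avg_m S F i' j'.
Proof. by move=> eqF; rewrite !avg_mE; under eq_bigr do rewrite eqF. Qed.

Lemma avg_t_eq (F : 'I_n -> tens R d) i j k i' j' k' :
  (forall l, F l i j k = F l i' j' k') -> avg_t S F i j k = avg_t S F i' j' k'.
Proof. by move=> eqF; rewrite /avg_t; under eq_bigr do rewrite eqF. Qed.

Lemma matvec_avg_m (F : 'I_n -> 'M[R]_d) (v : vec) :
  matvec (avg_m S F) v = avg_v S (fun i => matvec (F i) v).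
Proof.
apply/matrixP => i a; rewrite (ord1 i) matvecE [RHS]mxE summxE.
under eq_bigr do rewrite avg_mE -mulrA mulr_suml.
under [in RHS]eq_bigr do rewrite matvecE.
rewrite -mulr_sumr exchange_big.
by congr (_ * _); apply: eq_bigr => j _; rewrite mulr_sumr.
Qed.

Lemma tens3_avg_t (F : 'I_n -> tens R d) (u v w : vec) :
  tens3 (avg_t S F) u v w = c * \sum_(i in S) tens3 (F i) u v w.
Proof.
rewrite /tens3 [in RHS]exchange_big [in RHS]mulr_sumr; apply: eq_bigr => i _.
rewrite [in RHS]exchange_big [in RHS]mulr_sumr; apply: eq_bigr => j _.
rewrite [in RHS]exchange_big [in RHS]mulr_sumr; apply: eq_bigr => k _.
rewrite /avg_t -!mulrA; congr (_ * _).
by rewrite mulr_suml; apply: eq_bigr => l _; rewrite !mulrA.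
Qed.

Lemma normr_avg_le (e : 'I_n -> R) (K : R) :
  (0 < #|S|)%N -> (forall i, `|e i| <= K) -> `|c * \sum_(i in S) e i| <= K.
Proof.
move=> S_gt0 e_le.
have S_pos : 0 < #|S|%:R :> R by rewrite ltr0n.
rewrite normrM ger0_norm ?invr_ge0 ?ler0n // ler_pdivrMl //.
apply: le_trans (ler_norm_sum _ _ _) _.
apply: le_trans (ler_sum _ (fun i _ => e_le i)) _.
by rewrite sumr_const mulr_natl.
Qed.

Lemma grad_taylor_rem_avg (G : 'I_n -> vec -> vec) (H : 'I_n -> vec -> 'M[R]_d)
    (T : 'I_n -> vec -> tens R d) (x s w : vec) :
  grad_taylor_rem (fun y => avg_v S (fun i => G i y)) (fun y => avg_m S (fun i => H i y))
    (fun y => avg_t S (fun i => T i y)) x s w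
  = c * \sum_(i in S) grad_taylor_rem (G i) (H i) (T i) x s w.
Proof.
rewrite /grad_taylor_rem matvec_avg_m !dotv_avg_v tens3_avg_t !sumrB -mulr_sumr.
ring.
Qed.

End Averages.

Section ModelDerivative.
Variables (R : realType) (d : nat).
Local Notation vec := 'rV[R]_d.
Implicit Types (s w : vec) (B : 'M[R]_d) (A : tens R d).

Lemma is_derive_coord s w i : is_derive s w (fun y : vec => y 0 i) (w 0 i).
Proof. exact: is_derive_entry 0 i (is_derive_id s w). Qed.

Lemma is_derive_quad B s w :
  is_derive s w (quad B) (dotv w (matvec B s) + dotv s (matvec B w)).
Proof.
apply: (is_derive_ext (fun y => esym (dotv_matvec y B y))).
apply: is_derive_eq.
  apply: is_derive_sumr => i; apply: is_derive_sumr => j.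
  exact: is_derive_cmul (is_derive_mul (is_derive_coord s w i) (is_derive_coord s w j)).
rewrite !dotv_matvec -big_split; apply: eq_bigr => i _ /=.
by rewrite -big_split; apply: eq_bigr => j _ /=; ring.
Qed.

Lemma is_derive_tens_cube A s w :
  is_derive s w (tens_cube A) (tens3 A w s s + tens3 A s w s + tens3 A s s w).
Proof.
apply: is_derive_eq.
  apply: is_derive_sumr => i; apply: is_derive_sumr => j; apply: is_derive_sumr => k.
  apply: is_derive_mul (is_derive_coord s w k).
  apply: is_derive_mul (is_derive_coord s w j).
  exact: is_derive_cmul (is_derive_coord s w i).
rewrite /tens3 -!big_split; apply: eq_bigr => i _ /=.
rewrite -!big_split; apply: eq_bigr => j _ /=.
by rewrite -!big_split; apply: eq_bigr => k _ /=; ring.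
Qed.

Lemma is_derive_enorm4 s w :
  is_derive s w (fun y => enorm y ^+ 4) (4 * dotv s s * dotv s w).
Proof.
apply: (is_derive_ext (f := fun y => dotv y y * dotv y y)) => [y|].
  by rewrite -sqr_enorm -exprD.
have dss := is_derive_dotv (is_derive_id s w) (is_derive_id s w).
apply: is_derive_eq (is_derive_mul dss dss) _.
by rewrite /= (dotvC w s); ring.
Qed.

Lemma dotv_matvec_sym B u v :
  (forall i j, B i j = B j i) -> dotv u (matvec B v) = dotv v (matvec B u).
Proof.
move=> B_sym; rewrite !dotv_matvec exchange_big.
by apply: eq_bigr => i _; apply: eq_bigr => j _; rewrite (B_sym j i); ring.
Qed.

Lemma tens3_swap12 A u v w :
  (forall i j k, A i j k = A j i k) -> tens3 A u v w = tens3 A v u w.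
Proof.
move=> A_sym; rewrite /tens3 exchange_big; apply: eq_bigr => i _.
by apply: eq_bigr => j _; apply: eq_bigr => k _; rewrite A_sym; ring.
Qed.

Lemma tens3_swap23 A u v w :
  (forall i j k, A i j k = A i k j) -> tens3 A u v w = tens3 A u w v.
Proof.
move=> A_sym; apply: eq_bigr => i _; rewrite exchange_big.
by apply: eq_bigr => j _; apply: eq_bigr => k _; rewrite A_sym; ring.
Qed.

Lemma is_derive_model c g B A (sigma : R) s w :
  (forall i j, B i j = B j i) ->
  (forall i j k, A i j k = A j i k) -> (forall i j k, A i j k = A i k j) ->
  is_derive s w (fun y => c + dotv g y + 2^-1 * quad B y + 6^-1 * tens_cube A y
                          + sigma / 4 * enorm y ^+ 4)
    (dotv g w + dotv w (matvec B s) + 2^-1 * tens3 A w s s + sigma * dotv s s * dotv s w).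
Proof.
move=> B_sym A_sym12 A_sym23.
apply: is_derive_eq.
  apply: is_derive_add; last exact: is_derive_cmul (is_derive_enorm4 s w).
  apply: is_derive_add; last exact: is_derive_cmul (is_derive_tens_cube A s w).
  apply: is_derive_add; last exact: is_derive_cmul (is_derive_quad B s w).
  by apply: is_derive_add; last exact: is_derive_dotvr (is_derive_id s w).
rewrite (dotv_matvec_sym s w B_sym) (tens3_swap12 s w s A_sym12).
rewrite (tens3_swap23 s s w A_sym23) (tens3_swap12 s w s A_sym12).
by field.
Qed.

End ModelDerivative.

Section Estimates.
Variables (R : realType) (d : nat).
Local Notation vec := 'rV[R]_d.

Lemma powR_third_exp (e : R) n : 0 <= e -> powR e (1/3) ^+ n = powR e (n%:R / 3).
Proof.
move=> e_ge0; rewrite -powR_mulrn ?powR_ge0 // -powRrM.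
by rewrite mul1r mulrC.
Qed.

(* [2 a^3 + r^3 - 3 a^2 r = (a - r)^2 (2 a + r)] *)
Lemma sqr_mul_le_cubes (a r : R) : 0 <= a -> 0 <= r ->
  a ^+ 2 * r <= (2 * a ^+ 3 + r ^+ 3) / 3.
Proof.
move=> a_ge0 r_ge0; rewrite ler_pdivlMr // -subr_ge0.
rewrite (_ : _ - _ = (a - r) ^+ 2 * (2 * a + r)); last by ring.
by rewrite mulr_ge0 ?sqr_ge0 ?addr_ge0 ?mulr_ge0.
Qed.

Lemma sampling_error_le (g gr : vec) (B Hx : 'M[R]_d) (Tk Tx : tens R d) (eps : R)
    (s w : vec) : 0 < eps -> enorm w = 1 ->
  enorm (g - gr) <= 4^-1 * eps ->
  enorm (matvec (B - Hx) s) <= 4^-1 * powR eps (2/3) * enorm s ->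
  enorm (tens_sq Tk s - tens_sq Tx s) <= 2^-1 * powR eps (1/3) * enorm s ^+ 2 ->
  dotv w gr - dotv g w + (dotv w (matvec Hx s) - dotv w (matvec B s))
    + 2^-1 * (tens3 Tx w s s - tens3 Tk w s s)
  <= 2^-1 * eps + 4^-1 * enorm s ^+ 3.
Proof.
move=> eps_gt0 w_unit g_err B_err T_err.
set a := powR eps (1/3); set r := enorm s.
have a_ge0 : 0 <= a := powR_ge0 _ _.
have r_ge0 : 0 <= r := enorm_ge0 s.
have a3 : a ^+ 3 = eps by rewrite powR_third_exp ?ltW // divff ?pnatr_eq0 // powRr1 ?ltW.
have a2 : powR eps (2/3) = a ^+ 2 by rewrite powR_third_exp ?ltW.
have dotv_unit_le v : dotv w v <= enorm v by rewrite -[leRHS]mul1r -w_unit dotv_le_enorm.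
have eg : dotv w gr - dotv g w <= 4^-1 * eps.
  by rewrite (dotvC g) -dotvBr; apply: le_trans (dotv_unit_le _) _; rewrite -enormN opprB.
have eB : dotv w (matvec Hx s) - dotv w (matvec B s) <= 4^-1 * (a ^+ 2 * r).
  rewrite -dotvBr -matvecB; apply: le_trans (dotv_unit_le _) _.
  by rewrite matvecB -enormN opprB -matvecB mulrA -a2.
have eT : tens3 Tx w s s - tens3 Tk w s s <= 2^-1 * (r ^+ 2 * a).
  rewrite !tens3_sq -dotvBr; apply: le_trans (dotv_unit_le _) _.
  by rewrite -enormN opprB (mulrC (r ^+ 2)) mulrA.
have := sqr_mul_le_cubes a_ge0 r_ge0; have := sqr_mul_le_cubes r_ge0 a_ge0.
rewrite a3; lra.
Qed.

Lemma regularizer_grad_dotv_ge (sigma : R) (s w : vec) : 0 <= sigma -> enorm w = 1 ->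
  - (sigma * enorm s ^+ 3) <= sigma * dotv s s * dotv s w.
Proof.
move=> sigma_ge0 w_unit.
have := normr_dotv_le s w; rewrite w_unit mulr1 ler_norml => /andP[sw_ge _].
rewrite -sqr_enorm exprSr mulrA -mulrN.
by apply: ler_wpM2l sw_ge; rewrite mulr_ge0 ?sqr_ge0.
Qed.

Lemma enorm_le_of_dotv_le (v : vec) (c : R) :
  0 <= c -> (forall w, enorm w = 1 -> dotv w v <= c) -> enorm v <= c.
Proof.
have [->|v_neq0] := eqVneq v 0; first by rewrite enorm0.
move=> _ /(_ _ (enorm_normalize v_neq0)).
by rewrite dotvZl -sqr_enorm expr2 mulKf // gt_eqF ?enorm_gt0.
Qed.

Lemma lip3_ge0 (T : vec -> tens R d) (L : R) (v : vec) : v != 0 -> lip3 T L -> 0 <= L.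
Proof.
move=> v_neq0 T_lip; have u_unit := enorm_normalize v_neq0.
have := le_trans (normr_ge0 _) (T_lip v 0 _ _ _ u_unit u_unit u_unit).
by rewrite subr0 pmulr_lge0 ?enorm_gt0.
Qed.

Lemma cbrt_le_of_le_mul_cube (k X r : R) : 0 < k -> 0 <= r -> X <= k * r ^+ 3 ->
  powR k (- (1/3)) * cbrt X <= r.
Proof.
move=> k_gt0 r_ge0 X_le; rewrite /cbrt; case: ifP => X_ge0; last first.
  by apply: le_trans r_ge0; rewrite mulr_ge0_le0 ?powR_ge0 // oppr_le0 powR_ge0.
rewrite powRN mulrC ler_pdivrMr ?powR_gt0 //.
have -> : r * k `^ (1/3) = (k * r ^+ 3) `^ (1/3).
  rewrite powRM ?exprn_ge0 ?(ltW k_gt0) // mulrC; congr (_ * _).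
  by rewrite -powR_mulrn // -powRrM mul1r mulfV ?pnatr_eq0 // powRr1.
by apply: ge0_ler_powR; rewrite ?nnegrE // (le_trans X_ge0).
Qed.

End Estimates.

Theorem lemma2 (R : realType) (d n : nat)
  (f : 'I_n -> 'rV[R]_d -> R) (G : 'I_n -> 'rV[R]_d -> 'rV[R]_d)
  (H : 'I_n -> 'rV[R]_d -> 'M[R]_d) (T : 'I_n -> 'rV[R]_d -> tens R d)
  (L_f L_g L_b L_t : R)
  (hn : (0 < n)%N)
  (hG : forall i, is_grad (f i) (G i))
  (hH : forall i, is_hess (G i) (H i))
  (hT : forall i, is_third (H i) (T i))
  (lf : forall i, lip0 (f i) L_f)
  (lg : forall i, lip1 (G i) L_g)
  (lb : forall i, lip2 (H i) L_b)
  (lt : forall i, lip3 (T i) L_t)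
  (Sg Sb St : {set 'I_n})
  (x_k : 'rV[R]_d) (sigma_k eps theta zeta : R)
  (hsigma : 0 < sigma_k) (heps : 0 < eps) (htheta : 0 < theta) (hzeta : 0 < zeta)
  (s_k : 'rV[R]_d)
  (Dm1 : 'rV[R]_d -> 'rV[R]_d) (Dm2 : 'rV[R]_d -> 'M[R]_d) (Dm3 : 'rV[R]_d -> tens R d) :
  (* full objective f = 1/n sum f_i and its derivatives *)
  let fF := fun y => avg_s [set: 'I_n] (fun i => f i y) in
  let gradf := fun y => avg_v [set: 'I_n] (fun i => G i y) in
  let hessf := fun y => avg_m [set: 'I_n] (fun i => H i y) in
  let thirdf := fun y => avg_t [set: 'I_n] (fun i => T i y) in
  (* sampled estimates at x_k *)
  let g_k := avg_v Sg (fun i => G i x_k) in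
  let B_k := avg_m Sb (fun i => H i x_k) in
  let T_k := avg_t St (fun i => T i x_k) in
  (* cubic-regularized third-order model *)
  let m_k := fun s : 'rV[R]_d =>
    fF x_k + dotv g_k s + 2^-1 * quad B_k s + 6^-1 * tens_cube T_k s
      + sigma_k / 4 * enorm s ^+ 4 in
  (* sampling condition with kappa_g = 1/4, kappa_b = 1/4, kappa_t = 1/2 *)
  enorm (g_k - gradf x_k) <= 4^-1 * eps ->
  (forall s, enorm (matvec (B_k - hessf x_k) s) <= 4^-1 * powR eps (2/3) * enorm s) ->
  (forall s, enorm (tens_sq T_k s - tens_sq (thirdf x_k) s)
               <= 2^-1 * powR eps (1/3) * enorm s ^+ 2) ->
  (* Dm1, Dm2, Dm3 are the first three derivatives of m_k *)
  is_grad m_k Dm1 -> is_hess Dm1 Dm2 -> is_third Dm2 Dm3 ->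
  (* approximate minimization condition *)
  m_k s_k < m_k 0 ->
  chi_m1 (Dm1 s_k) <= theta * enorm s_k ^+ 3 ->
  chi_m2 (Dm2 s_k) <= theta * enorm s_k ^+ 2 ->
  chi_m3 zeta (Dm2 s_k) (Dm3 s_k) <= theta * enorm s_k ->
  let eps1 := eps in
  let kappa_k := sigma_k + L_t / 2 + theta + 4^-1 in
  powR kappa_k (- (1/3)) * cbrt (enorm (gradf (x_k + s_k)) - 2^-1 * eps1)
    <= enorm s_k.
Proof.
move=> fF gradf hessf thirdf g_k B_k T_k m_k g_err B_err T_err dm_k _ _ m_decr chi1 _ _.
cbv zeta.
have H_sym i := is_hess_sym (hG i) (hH i) (lb i).
have T_sym23 i := is_third_sym23 (hH i) (hT i) (lt i).
have T_sym12 i := is_third_sym12 (H_sym i) (hT i).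
have B_sym i j : B_k i j = B_k j i := avg_m_eq _ (fun l => H_sym l x_k i j).
have T_k_sym12 i j k : T_k i j k = T_k j i k := avg_t_eq _ (fun l => T_sym12 l x_k i j k).
have T_k_sym23 i j k : T_k i j k = T_k i k j := avg_t_eq _ (fun l => T_sym23 l x_k i j k).
have s_neq0 : s_k != 0 by apply: contraTneq m_decr => ->; rewrite ltxx.
have L_t_ge0 : 0 <= L_t := lip3_ge0 s_neq0 (lt (Ordinal hn)).
have r3_ge0 : 0 <= enorm s_k ^+ 3 by rewrite exprn_ge0 ?enorm_ge0.
apply: cbrt_le_of_le_mul_cube (enorm_ge0 _) _; first lra.
suff : enorm (gradf (x_k + s_k))
       <= 2^-1 * eps + (sigma_k + L_t / 6 + theta + 4^-1) * enorm s_k ^+ 3.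
  by have := mulr_ge0 L_t_ge0 r3_ge0; lra.
apply: enorm_le_of_dotv_le => [|w w_unit].
  by apply: addr_ge0; [lra | apply: mulr_ge0 => //; lra].
have taylor : `|grad_taylor_rem gradf hessf thirdf x_k s_k w| <= L_t / 6 * enorm s_k ^+ 3.
  rewrite grad_taylor_rem_avg; apply: normr_avg_le => [|i]; first by rewrite cardsT card_ord.
  exact: (grad_taylor_rem_le (hH i) (hT i) (lt i) x_k s_k w_unit).
have model_dotv : dotv (Dm1 s_k) w = dotv g_k w + dotv w (matvec B_k s_k)
                                + 2^-1 * tens3 T_k w s_k s_k + sigma_k * dotv s_k s_k * dotv s_k w.
  have [_ <-] := dm_k s_k w.
  by have [_ <-] := is_derive_model (fF x_k) g_k sigma_k s_k w B_sym T_k_sym12 T_k_sym23.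
have sampling := sampling_error_le heps w_unit g_err (B_err s_k) (T_err s_k).
have model_le : dotv (Dm1 s_k) w <= theta * enorm s_k ^+ 3.
  by apply: le_trans (dotv_le_enorm _ _) _; rewrite w_unit mulr1.
have reg := regularizer_grad_dotv_ge s_k (ltW hsigma) w_unit.
move: taylor => /ler_normlW; rewrite /grad_taylor_rem; lra.
Qed.
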